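(* Let $E$ be finite, $\Omega=E^{\mathbb{Z}}$ with left shift $S$, fix $\mathtt a\in E$ and let $\mathbf a$ be the all-$\mathtt a$ configuration. Let $\phi\in C(\Omega)$ have the extensibility property, let $\gamma^\phi$ be the associated Gibbsian specification $\gamma^\phi_\Lambda(\omega_\Lambda|\omega_{\Lambda^c})=\big(\sum_{\xi_\Lambda\in E^\Lambda}e^{\rho^\phi(\xi_\Lambda\omega_{\mathbb{Z}\setminus\Lambda},\omega)}\big)^{-1}$, and let $\phi_{\gamma^\phi}(\omega)=\log\frac{\gamma^\phi_{\{0\}}(\omega_0|\mathbf a_{-\infty}^{-1}\omega_1^\infty)}{\gamma^\phi_{\{0\}}(\mathtt a|\mathbf a_{-\infty}^{-1}\omega_1^\infty)}$. Then $\phi_{\gamma^\phi}$ is weakly cohomologous to $\phi$: there exists $C\in\mathbb{R}$ such that for every shift-invariant Borel probability measure $\tau$ on $\Omega$, $$\int_\Omega\phi_{\gamma^\phi}\,d\tau=\int_\Omega\phi\,d\tau+C.$$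
   Context: $E$ finite, discrete; $\Omega=E^{\mathbb{Z}}$ with product topology; $(S\omega)_i=\omega_{i+1}$. For $\omega\in\Omega$, $a\in E$, $\omega^a$ equals $a$ at $0$ and $\omega_k$ at $k\neq0$. A continuous $\phi$ has the extensibility property if for all $a,\tilde a\in E$, $\sum_{i=-n}^{n}[\phi(S^i\omega^a)-\phi(S^i\omega^{\tilde a})]$ converges uniformly in $\omega$; then $\rho^\phi(\xi,\eta)=\lim_{n}\sum_{i=-n}^n[\phi(S^i\xi)-\phi(S^i\eta)]$ exists for all $\xi,\eta$ differing at finitely many sites, and $\gamma^\phi$ above is a translation-invariant Gibbsian specification. $\xi_\Lambda\omega_{\mathbb{Z}\setminus\Lambda}$ equals $\xi$ on $\Lambda$ and $\omega$ elsewhere; $\mathbf a_{-\infty}^{-1}\omega_1^\infty$ is the boundary condition equal to $\mathtt a$ on negative sites and $\omega_k$ on sites $k\ge1$ (so $\phi_{\gamma^\phi}$ depends only on $\omega_0,\omega_1,\dots$). *)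

From HB Require Import structures.
From mathcomp Require Import all_boot all_order all_algebra.
From mathcomp Require Import all_classical all_reals all_analysis.
Set Implicit Arguments. Unset Strict Implicit. Unset Printing Implicit Defensive.
Import Order.TTheory GRing.Theory Num.Theory numFieldNormedType.Exports.
Local Open Scope classical_set_scope.
Local Open Scope ring_scope.

(* Configuration space Omega = E^Z.  It is parameterized by a distinguished
   letter a (the letter "a" of the statement) only in order to equip it with
   a pointedType structure (needed by g_sigma_algebraType). *)
Section Config.
Variables (E : finType) (a : E).
Definition Omega of E := int -> E.
HB.instance Definition _ := Choice.on (Omega a).
HB.instance Definition _ := isPointed.Build (Omega a) (fun _ => a).
End Config.

Section Defs.
Variables (E : finType) (a : E).
Local Notation Om := (Omega a).

Definition Sshift (w : Om) : Om := fun k => w (k + 1).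
Definition shiftn (i : int) (w : Om) : Om := fun k => w (k + i).

Definition upd (w : Om) (b : E) : Om := fun k => if k == 0 then b else w k.

Definition cyl (n : nat) (w : Om) : set Om :=
  [set w' | forall k : int, `|k| <= n%:Z -> w' k = w k].

(* product topology (E discrete): cylinders form a neighbourhood base *)
Definition prod_open (U : set Om) : Prop :=
  forall w, U w -> exists n, cyl n w `<=` U.

Definition BorelOmega := g_sigma_algebraType prod_open.

Variable R : realType.

Definition cont_Omega (phi : Om -> R) : Prop :=
  forall w (e : R), 0 < e -> exists n, forall w', cyl n w w' -> `|phi w' - phi w| < e.

Definition symsum (phi : Om -> R) (x y : Om) (n : nat) : R :=
  \sum_(0 <= j < (2 * n).+1)
     (phi (shiftn (j%:Z - n%:Z) x) - phi (shiftn (j%:Z - n%:Z) y)).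

Definition extensible (phi : Om -> R) : Prop :=
  forall b b' : E, exists g : Om -> R,
    forall e : R, 0 < e -> exists N : nat, forall n, (N <= n)%N ->
      forall w, `|symsum phi (upd w b) (upd w b') n - g w| < e.

Definition rho (phi : Om -> R) (x y : Om) : R := limn (symsum phi x y).

(* single-site Gibbsian specification:
   gamma_{0}(w_0 | w_{Z\0}) = (sum_{c in E} exp rho(w^c, w))^{-1} *)
Definition gamma0 (phi : Om -> R) (w : Om) : R :=
  (\sum_(c : E) expR (rho phi (upd w c) w))^-1.

Definition bc (w : Om) : Om := fun k => if k < 0 then a else w k.

Definition phi_gamma (phi : Om -> R) (w : Om) : R :=
  ln (gamma0 phi (bc w) / gamma0 phi (upd (bc w) a)).

End Defs.

(* Put x = a_{-oo}^{-1} w_0^oo.  As rho is additive along one-site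
   modifications, the normalising sums of gamma_{0}(.|x) and gamma_{0}(.|x^a)
   differ by the factor exp rho(x^a, x), so phi_gamma(w) = rho(x, x^a), the
   limit, uniform in w, of F_n(w) = sum_{|i|<=n} [phi(S^i x) - phi(S^i x^a)].
   Since S^i x^a = S^(i-1) of the boundary condition of S w, F_n is the
   telescoping sum u_n - u_{-n-1}, where u_i(w) = phi(S^i x), plus a coboundary
   h o S - h, whose integral vanishes for shift-invariant tau.  Finally
   int u_n -> int phi, because S^n x and S^n w agree on [-n, oo) and phi is
   uniformly continuous (Omega is compact), and u_{-n-1} -> phi(a a a ...)
   uniformly, because S^(-n-1) x equals a on [-n, n].  Hence C = -phi(a a a ...). *)

From mathcomp Require Import all_boot all_order all_algebra.
From mathcomp Require Import all_classical all_reals all_analysis.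
From mathcomp Require Import zify lra.
Import Order.TTheory GRing.Theory Num.Theory numFieldNormedType.Exports.
Set Implicit Arguments. Unset Strict Implicit. Unset Printing Implicit Defensive.
Local Open Scope classical_set_scope.
Local Open Scope ring_scope.

Definition infinitely_often (P : nat -> Prop) := forall M, exists2 N, (M <= N)%N & P N.

Lemma infinitely_often_pigeonhole (T : finType) (P : nat -> Prop) (g : nat -> T) :
  infinitely_often P -> exists c, infinitely_often (fun N => P N /\ g N = c).
Proof.
move=> P_io; apply: contrapT => /forallNP not_io.
have /choice [M HM] : forall c, exists M, forall N, (M <= N)%N -> ~ (P N /\ g N = c).
  move=> c; have /existsNP [M HM] := not_io c.
  by exists M => N MN PN; apply: HM; exists N.
have [N MN PN] := P_io (\max_c M c).
by apply: (HM (g N) N) => //; apply: leq_trans MN; exact: leq_bigmax.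
Qed.

Section UniformConvergence.
Variables (T : Type) (R : realType).

Definition unif_cvg (f : nat -> T -> R) (g : T -> R) :=
  forall e : R, 0 < e -> exists N, forall n, (N <= n)%N -> forall x, `|f n x - g x| < e.

Lemma unif_cvg_pointwise f g x : unif_cvg f g -> f ^~ x @ \oo --> g x.
Proof.
move=> fg; apply/cvgrPdist_lt => e e0; have [N HN] := fg e e0.
by exists N => // n /= Nn; rewrite distrC; exact: HN.
Qed.

Lemma unif_cvg_fin (I : finType) (f : I -> nat -> T -> R) (g : I -> T -> R) (c : T -> I) :
  (forall i, unif_cvg (f i) (g i)) -> unif_cvg (fun n x => f (c x) n x) (fun x => g (c x) x).
Proof.
move=> fg e e0; have /choice [N HN] := fun i => fg i e e0.
exists (\max_i N i) => n Nn x; apply: HN.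
by apply: leq_trans Nn; exact: leq_bigmax.
Qed.

End UniformConvergence.

Section Compactness.
Variables (E : finType) (a : E).
Local Notation Om := (Omega a).

Definition agree_below (d : nat) (w w' : Om) := forall k : int, `|k| < d%:Z -> w' k = w k.

Lemma agree_below_extend (ws : nat -> Om) d p :
  infinitely_often (fun N => agree_below d p (ws N)) ->
  exists2 p', agree_below d p p' & infinitely_often (fun N => agree_below d.+1 p' (ws N)).
Proof.
move=> p_io.
have [c Hc] := infinitely_often_pigeonhole (fun N => (ws N (- d%:Z), ws N d%:Z)) p_io.
exists (fun k => if k == d%:Z then c.2 else if k == - d%:Z then c.1 else p k).
  move=> k hk; case: eqP => [?|_]; first lia.
  case: eqP => [?|_] //; lia.
move=> M; have [N MN [HN <-]] := Hc M; exists N => // k hk.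
do 2![case: eqP => [->|?] //]; apply: HN; lia.
Qed.

Lemma cluster_point (ws : nat -> Om) :
  exists w, forall n, infinitely_often (fun N => cyl n w (ws N)).
Proof.
have /choice [next Hnext] : forall dp : nat * Om, exists p',
    infinitely_often (fun N => agree_below dp.1 dp.2 (ws N)) ->
    agree_below dp.1 dp.2 p' /\ infinitely_often (fun N => agree_below dp.1.+1 p' (ws N)).
  move=> [d p] /=.
  have [p_io|not_io] := pselect (infinitely_often (fun N => agree_below d p (ws N))).
    by have [p' ? ?] := agree_below_extend p_io; exists p'.
  by exists p => /not_io.
pose fix approx d := if d is d'.+1 then next (d', approx d') else ws 0%N.
have approx_io d : infinitely_often (fun N => agree_below d (approx d) (ws N)).
  elim: d => [|d IH]; first by move=> M; exists M => // k; lia.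
  exact: (Hnext (d, approx d) IH).2.
have approx_mono d d' : (d <= d')%N -> agree_below d (approx d) (approx d').
  move=> /subnK <-; elim: (d' - d)%N => [|m IH] //= k hk.
  rewrite (Hnext (m + d, approx (m + d))%N (approx_io _)).1 /=; [exact: IH|lia].
exists (fun k => approx `|k|.+1 k) => n M.
have [N MN HN] := approx_io n.+1 M; exists N => // k hk.
rewrite HN; last lia.
by apply: approx_mono; lia.
Qed.

End Compactness.

Section Continuity.
Variables (R : realType) (E : finType) (a : E).
Local Notation Om := (Omega a).
Implicit Types (f g : Om -> R) (w : Om).

Lemma cyl_le m n w w' : (m <= n)%N -> cyl n w w' -> cyl m w w'.
Proof. by move=> mn h k hk; apply: h; lia. Qed.

Lemma cont_Omega_bounded f : cont_Omega f -> exists K : R, forall w, `|f w| <= K.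
Proof.
move=> cf; apply: contrapT => /forallNP unbounded.
have /choice [ws Hws] : forall N : nat, exists w, N%:R < `|f w|.
  move=> N; have /existsNP [w /negP] := unbounded N%:R.
  by rewrite -ltNge; exists w.
have [w Hw] := cluster_point ws.
have [n Hn] := cf w 1 ltr01.
have [M fwM] : exists M : nat, `|f w| + 1 < M%:R by eexists; exact: truncnS_gt.
have [N MN HN] := Hw n M.
have := Hn _ HN; have := Hws N; have : M%:R <= N%:R :> R by rewrite ler_nat.
have := ler_normD (f (ws N) - f w) (f w); rewrite subrK.
lra.
Qed.

Lemma cont_Omega_uniform f : cont_Omega f -> forall e : R, 0 < e ->
  exists n, forall w w', cyl n w w' -> `|f w' - f w| < e.
Proof.
move=> cf e e0; apply: contrapT => /forallNP not_unif.
have /choice [ws Hws] : forall N : nat,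
    exists ww : Om * Om, cyl N ww.1 ww.2 /\ e <= `|f ww.2 - f ww.1|.
  move=> N; have /existsNP [w /existsNP [w' /not_implyP [hw]]] := not_unif N.
  by move/negP; rewrite -leNgt; exists (w, w').
have [w Hw] := cluster_point (fun N => (ws N).1).
have [n Hn] := cf w (e / 2) (divr_gt0 e0 (ltr0Sn _ 1)).
have [N nN HN] := Hw n n; have [close far] := Hws N.
have HN' : cyl n w (ws N).2 by move=> k hk; rewrite close ?HN //; lia.
have := Hn _ HN; have := Hn _ HN'.
have := ler_distD (f w) (f (ws N).2) (f (ws N).1).
rewrite [`|f w - _|]distrC; lra.
Qed.

Lemma cont_Omega_cst (c : R) : cont_Omega (fun _ : Om => c).
Proof. by move=> w e e0; exists 0%N => w' _; rewrite subrr normr0. Qed.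

Lemma cont_OmegaD f g : cont_Omega f -> cont_Omega g -> cont_Omega (fun w => f w + g w).
Proof.
move=> cf cg w e e0; have e2 : 0 < e / 2 by rewrite divr_gt0.
have [n1 H1] := cf w _ e2; have [n2 H2] := cg w _ e2.
exists (maxn n1 n2) => w' h.
have := H1 w' (cyl_le (leq_maxl _ _) h); have := H2 w' (cyl_le (leq_maxr _ _) h).
have := ler_normD (f w' - f w) (g w' - g w).
rewrite addrACA -opprD; lra.
Qed.

Lemma cont_OmegaN f : cont_Omega f -> cont_Omega (fun w => - f w).
Proof.
move=> cf w e e0; have [n Hn] := cf w e e0.
by exists n => w' h; rewrite -opprD normrN; exact: Hn.
Qed.

Lemma cont_OmegaB f g : cont_Omega f -> cont_Omega g -> cont_Omega (fun w => f w - g w).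
Proof. by move=> cf cg; apply: cont_OmegaD => //; exact: cont_OmegaN. Qed.

Lemma cont_Omega_sum (s : seq nat) (F : nat -> Om -> R) :
  (forall j, cont_Omega (F j)) -> cont_Omega (fun w => \sum_(j <- s) F j w).
Proof.
move=> cF; elim: s => [|j s IH].
  by under eq_fun do rewrite big_nil; exact: cont_Omega_cst.
by under eq_fun do rewrite big_cons; exact: cont_OmegaD.
Qed.

Lemma cont_Omega_unif_cvg (fs : nat -> Om -> R) g :
  (forall n, cont_Omega (fs n)) -> unif_cvg fs g -> cont_Omega g.
Proof.
move=> cfs fs_g w e e0; have e3 : 0 < e / 3 by rewrite divr_gt0.
have [N HN] := fs_g _ e3; have [n Hn] := cfs N w _ e3.
exists n => w' hw.
have := Hn _ hw; have := HN N (leqnn N) w; have := HN N (leqnn N) w'.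
have := ler_distD (fs N w') (g w') (g w); have := ler_distD (fs N w) (fs N w') (g w).
rewrite [`|g w' - fs N w'|]distrC; lra.
Qed.

Definition cont_map (T : Om -> Om) :=
  forall n, exists m, forall w w', cyl m w w' -> cyl n (T w) (T w').

Lemma cont_Omega_comp f T : cont_Omega f -> cont_map T -> cont_Omega (fun w => f (T w)).
Proof.
move=> cf cT w e e0; have [n Hn] := cf (T w) e e0.
by have [m Hm] := cT n; exists m => w' h; exact/Hn/Hm.
Qed.

Lemma cont_map_comp T1 T2 : cont_map T1 -> cont_map T2 -> cont_map (fun w => T1 (T2 w)).
Proof.
move=> c1 c2 n; have [m1 H1] := c1 n; have [m2 H2] := c2 m1.
by exists m2 => w w' h; exact/H1/H2.
Qed.

Lemma cont_map_shiftn i : cont_map (shiftn i).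
Proof. by move=> n; exists (n + `|i|)%N => w w' h k hk; apply: h; lia. Qed.

Lemma cont_map_bc : cont_map (@bc E a).
Proof. by move=> n; exists n => w w' h k hk; rewrite /bc; case: ifP => // _; exact: h. Qed.

End Continuity.
Arguments cont_map_shiftn {E a}.
Arguments cont_map_bc {E a}.

Section Integration.
Variables (R : realType) (E : finType) (a : E).
Local Notation Om := (Omega a).
Local Notation B := (BorelOmega a).
Implicit Types (f g : Om -> R).

Lemma cont_Omega_measurable f : cont_Omega f -> measurable_fun (setT : set B) f.
Proof.
move=> cf; apply: (measurability _ (measurable_realfun.RGenOInfty.measurableE R)).
move=> _ [_ [x ->] <-]; apply: sub_sigma_algebra => w [_ /=].
rewrite in_itv /= andbT => xw.
have [n Hn] := cf w (f w - x) ltac:(by rewrite subr_gt0).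
exists n => w' hw; split => //=; rewrite in_itv /= andbT.
by have := Hn _ hw; rewrite ltr_norml => /andP[+ _]; lra.
Qed.

Lemma cont_map_measurable (T : Om -> Om) : cont_map T -> measurable_fun (setT : set B) (T : B -> B).
Proof.
move=> cT; apply: (@measurability _ _ B B setT T (@prod_open _ a)) => //.
move=> _ [U oU <-]; apply: sub_sigma_algebra => w [_ /= Uw].
have [n Hn] := oU _ Uw; have [m Hm] := cT n.
by exists m => w' hw; split => //; apply: Hn; exact: Hm.
Qed.

Variable tau : probability B R.

Lemma cont_Omega_integrable f : cont_Omega f -> tau.-integrable setT (EFin \o f).
Proof.
move=> cf; apply: measurable_bounded_integrable => //.
- by rewrite (le_lt_trans (probability_le1 tau measurableT)) ?ltry.
- exact: cont_Omega_measurable.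
- have [K HK] := cont_Omega_bounded cf; exists K; split; first exact: num_real.
  by move=> x Kx y _ /=; apply: le_trans (HK y) _; exact: ltW.
Qed.

Lemma integral_EFin_Rintegral f : cont_Omega f ->
  (\int[tau]_w (f w)%:E)%E = (\int[tau]_w f w)%:E.
Proof.
by move=> cf; rewrite fineK // integrable_fin_num //; exact: cont_Omega_integrable.
Qed.

Lemma Rintegral_cst_probability (c : R) : \int[tau]_w c = c.
Proof. by rewrite Rintegral_cst // [X in fine X]probability_setT mulr1. Qed.

Lemma Rintegral_dist_le f g (e : R) : cont_Omega f -> cont_Omega g ->
  (forall w, `|f w - g w| <= e) -> `|\int[tau]_w f w - \int[tau]_w g w| <= e.
Proof.
move=> cf cg fg; have cfg := cont_OmegaB cf cg.
rewrite -RintegralB //; try exact: cont_Omega_integrable.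
apply: le_trans (le_normr_Rintegral _ _) _ => //; first exact: cont_Omega_integrable.
rewrite -[leRHS]Rintegral_cst_probability; apply: le_Rintegral => //.
- exact/integrable_norm/cont_Omega_integrable.
- exact/cont_Omega_integrable/cont_Omega_cst.
Qed.

Lemma Rintegral_unif_cvg (fs : nat -> Om -> R) g :
  (forall n, cont_Omega (fs n)) -> cont_Omega g -> unif_cvg fs g ->
  \int[tau]_w fs n w @[n --> \oo] --> \int[tau]_w g w.
Proof.
move=> cfs cg fs_g; apply/cvgrPdist_lt => e e0.
have [N HN] := fs_g (e / 2) (divr_gt0 e0 (ltr0Sn _ 1)).
exists N => // n /= Nn; rewrite distrC.
apply: le_lt_trans (Rintegral_dist_le (cfs n) cg (fun w => ltW (HN n Nn w))) _.
by rewrite ltr_pdivrMr // ltr_pMr // ltr1n.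
Qed.

Lemma Rintegral_sum (s : seq nat) (fs : nat -> Om -> R) : (forall j, cont_Omega (fs j)) ->
  \int[tau]_w (\sum_(j <- s) fs j w) = \sum_(j <- s) \int[tau]_w fs j w.
Proof.
move=> cfs; elim: s => [|j s IH].
  by rewrite big_nil -[RHS](Rintegral_cst_probability 0); apply: eq_Rintegral => w _; rewrite big_nil.
rewrite big_cons -IH -RintegralD //; first by apply: eq_Rintegral => w _; rewrite big_cons.
- exact: cont_Omega_integrable.
- exact/cont_Omega_integrable/cont_Omega_sum.
Qed.

Hypothesis tau_inv : forall A : set B, measurable A -> tau (Sshift (a:=a) @^-1` A) = tau A.

Lemma Rintegral_Sshift f : cont_Omega f -> \int[tau]_w f (Sshift w) = \int[tau]_w f w.
Proof.
move=> cf; have cS : cont_map (@Sshift E a) := cont_map_shiftn 1.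
have mf := (measurable_realfun.measurable_EFinP _ (f : B -> R)).2 (cont_Omega_measurable cf).
have intfS : tau.-integrable (@Sshift E a @^-1` setT) ((EFin \o (f : B -> R)) \o @Sshift E a).
  exact: cont_Omega_integrable (cont_Omega_comp cf cS).
rewrite /Rintegral -(integral_pushforward (cont_map_measurable cS) mf intfS measurableT).
congr fine; apply: eq_measure_integral => [|? A mA _]; first exact: cont_map_measurable cS.
exact: tau_inv.
Qed.

Lemma Rintegral_shiftn f (n : nat) : cont_Omega f ->
  \int[tau]_w f (shiftn n w) = \int[tau]_w f w.
Proof.
move=> cf; elim: n => [|n IH].
  by apply: eq_Rintegral => w _; congr f; apply/funext => k; rewrite /shiftn addr0.
rewrite -IH -[RHS]Rintegral_Sshift; last exact/cont_Omega_comp/cont_map_shiftn.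
apply: eq_Rintegral => w _; congr f; apply/funext => k.
by rewrite /shiftn /Sshift; congr w; lia.
Qed.

End Integration.

Section Specification.
Variables (R : realType) (E : finType) (a : E) (phi : Omega a -> R).
Local Notation Om := (Omega a).
Implicit Types (x y z w : Om).

Lemma symsum_trans x y z n : symsum phi x z n = symsum phi x y n + symsum phi y z n.
Proof. by rewrite /symsum -big_split /=; apply: eq_bigr => j _; rewrite addrA subrK. Qed.

Lemma symsum_antisym x y n : symsum phi x y n = - symsum phi y x n.
Proof. by rewrite /symsum -sumrN; apply: eq_bigr => j _; rewrite opprB. Qed.

Lemma upd_at0 x : upd x (x 0) = x.
Proof. by apply/funext => k; rewrite /upd; case: eqP => // ->. Qed.

Lemma upd_upd x b c : upd (upd x b) c = upd x c.
Proof. by apply/funext => k; rewrite /upd; case: (k == 0). Qed.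

Hypothesis phi_ext : extensible phi.

Lemma symsum_upd_unif_cvg b b' : unif_cvg (fun n w => symsum phi (upd w b) (upd w b') n)
  (fun w => rho phi (upd w b) (upd w b')).
Proof.
have [g g_lim] := phi_ext b b'.
have {}g_lim : unif_cvg (fun n w => symsum phi (upd w b) (upd w b') n) g by [].
suff -> : (fun w => rho phi (upd w b) (upd w b')) = g by [].
by apply/funext => w; apply: cvg_lim => //; exact: unif_cvg_pointwise g_lim.
Qed.

Lemma symsum_upd_cvg x b b' :
  symsum phi (upd x b) (upd x b') @ \oo --> rho phi (upd x b) (upd x b').
Proof. exact: unif_cvg_pointwise (symsum_upd_unif_cvg b b'). Qed.

Lemma rho_upd_trans x b b' b'' :
  rho phi (upd x b) (upd x b'') = rho phi (upd x b) (upd x b') + rho phi (upd x b') (upd x b'').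
Proof.
apply: cvg_lim => //.
have -> : symsum phi (upd x b) (upd x b'') =
    symsum phi (upd x b) (upd x b') + symsum phi (upd x b') (upd x b'').
  by apply/funext => n; exact: symsum_trans.
by apply: cvgD; exact: symsum_upd_cvg.
Qed.

Lemma rho_upd_antisym x b b' : rho phi (upd x b) (upd x b') = - rho phi (upd x b') (upd x b).
Proof.
apply: cvg_lim => //.
have -> : symsum phi (upd x b) (upd x b') = - symsum phi (upd x b') (upd x b).
  by apply/funext => n; exact: symsum_antisym.
by apply: cvgN; exact: symsum_upd_cvg.
Qed.

Lemma phi_gamma_rho w : phi_gamma phi w = rho phi (bc w) (upd (bc w) a).
Proof.
set x := bc w; rewrite /phi_gamma /gamma0 -/x.
have rho_x c : rho phi (upd x c) x = rho phi (upd x c) (upd x a) + rho phi (upd x a) x.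
  by have := rho_upd_trans x c a (x 0); rewrite upd_at0.
under eq_bigr do rewrite rho_x expRD.
under [X in _ / X^-1]eq_bigr do rewrite upd_upd.
rewrite -mulr_suml invfM invrK mulrAC mulVf ?mul1r; last first.
  rewrite gt_eqF // (bigD1 a) //= ltr_pwDl ?expR_gt0 //.
  by apply: sumr_ge0 => c _; exact: expR_ge0.
rewrite -expRN expRK.
by have := rho_upd_antisym x (x 0) a; rewrite upd_at0.
Qed.

Definition phi_gamma_approx (n : nat) w := symsum phi (bc w) (upd (bc w) a) n.

Lemma phi_gamma_approx_unif_cvg : unif_cvg phi_gamma_approx (phi_gamma phi).
Proof.
have at_bc0 : unif_cvg (fun n w => symsum phi (upd (bc w) (bc w 0)) (upd (bc w) a) n)
    (fun w => rho phi (upd (bc w) (bc w 0)) (upd (bc w) a)).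
  apply: (@unif_cvg_fin _ _ _ (fun b n w => symsum phi (upd (bc w) b) (upd (bc w) a) n)
    (fun b w => rho phi (upd (bc w) b) (upd (bc w) a))) => b e e0.
  by have [N HN] := symsum_upd_unif_cvg b a e0; exists N => n Nn w; exact: HN.
move=> e e0; have [N HN] := at_bc0 e e0; exists N => n Nn w.
by have := HN n Nn w; rewrite upd_at0 phi_gamma_rho.
Qed.

Definition phi_shift_bc (i : int) w := phi (shiftn i (bc w)).

Lemma shiftn_upd_bc w i : shiftn i (upd (bc w) a) = shiftn (i - 1) (bc (Sshift w)).
Proof.
apply/funext => k; rewrite /shiftn /upd /bc /Sshift -addrA subrK.
by case: eqP => ki; repeat case: ifPn => ? //; lia.
Qed.

Lemma phi_gamma_approx_telescoping n : phi_gamma_approx n = fun w =>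
  \sum_(0 <= j < (2 * n).+1)
    (phi_shift_bc (j%:Z - n%:Z) w - phi_shift_bc (j%:Z - n%:Z - 1) (Sshift w)).
Proof. by apply/funext => w; apply: eq_bigr => j _; rewrite shiftn_upd_bc. Qed.

Hypothesis phi_cont : cont_Omega phi.

Lemma cont_phi_shift_bc i : cont_Omega (phi_shift_bc i).
Proof. exact/cont_Omega_comp/cont_map_comp/cont_map_bc/cont_map_shiftn. Qed.

Lemma cont_phi_gamma_approx n : cont_Omega (phi_gamma_approx n).
Proof.
rewrite phi_gamma_approx_telescoping; apply: cont_Omega_sum => j; apply: cont_OmegaB; first exact: cont_phi_shift_bc.
exact/cont_Omega_comp/(cont_map_shiftn 1)/cont_phi_shift_bc.
Qed.

Lemma cont_phi_gamma : cont_Omega (phi_gamma phi).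
Proof. exact: cont_Omega_unif_cvg cont_phi_gamma_approx phi_gamma_approx_unif_cvg. Qed.

End Specification.

Section ShiftInvariance.
Variables (R : realType) (E : finType) (a : E) (phi : Omega a -> R).
Hypothesis phi_cont : cont_Omega phi.
Variable tau : probability (BorelOmega a) R.
Hypothesis tau_inv :
  forall A : set (BorelOmega a), measurable A -> tau (Sshift (a:=a) @^-1` A) = tau A.

Lemma Rintegral_phi_gamma_approx n : \int[tau]_w phi_gamma_approx phi n w =
  \int[tau]_w phi_shift_bc phi n%:Z w - \int[tau]_w phi_shift_bc phi (- n%:Z - 1) w.
Proof.
have cu i : cont_Omega (phi_shift_bc phi i) := cont_phi_shift_bc phi_cont i.
have cuS i : cont_Omega (fun w => phi_shift_bc phi i (Sshift w)).
  exact: cont_Omega_comp (cu i) (cont_map_shiftn 1).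
rewrite phi_gamma_approx_telescoping.
rewrite Rintegral_sum => [|j]; last exact: cont_OmegaB.
pose v j := \int[tau]_w phi_shift_bc phi (j%:Z - n%:Z - 1) w.
rewrite (eq_bigr (fun j => v j.+1 - v j)) => [|j _]; last first.
  rewrite RintegralB ?(Rintegral_Sshift tau_inv) //; try exact: cont_Omega_integrable.
  by rewrite /v; congr (_ - _); congr Rintegral; apply/funext => w; congr phi_shift_bc; lia.
rewrite telescope_sumr // /v; congr (_ - _); congr Rintegral; apply/funext => w;
  congr phi_shift_bc; lia.
Qed.

Lemma Rintegral_phi_shift_bc_cvg :
  \int[tau]_w phi_shift_bc phi n%:Z w @[n --> \oo] --> \int[tau]_w phi w.
Proof.
have cu n : cont_Omega (phi_shift_bc phi n) := cont_phi_shift_bc phi_cont n.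
have cphiS n : cont_Omega (fun w => phi (shiftn n w)).
  exact: cont_Omega_comp phi_cont (cont_map_shiftn n).
have -> : (fun n : nat => \int[tau]_w phi_shift_bc phi n%:Z w) = fun n =>
    \int[tau]_w (phi_shift_bc phi n%:Z w - phi (shiftn n%:Z w)) + \int[tau]_w phi w.
  apply/funext => n; rewrite RintegralB ?(Rintegral_shiftn tau_inv) ?subrK //;
  exact: cont_Omega_integrable.
rewrite -[X in _ --> X]add0r; apply: cvgD (cvg_cst _).
rewrite -(Rintegral_cst_probability tau 0).
apply: Rintegral_unif_cvg => [n||e e0]; [exact: cont_OmegaB | exact: cont_Omega_cst |].
have [m Hm] := cont_Omega_uniform phi_cont e0; exists m => n mn w.
rewrite subr0 distrC; apply: Hm => k hk.
by rewrite /shiftn /bc ifN //; lia.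
Qed.

Lemma Rintegral_phi_shift_bc_cvg_left :
  \int[tau]_w phi_shift_bc phi (- n%:Z - 1) w @[n --> \oo] --> phi (fun _ => a).
Proof.
rewrite -(Rintegral_cst_probability tau (phi _)).
apply: Rintegral_unif_cvg => [n||e e0]; [exact: cont_phi_shift_bc | exact: cont_Omega_cst |].
have [m Hm] := phi_cont (fun _ => a) e0; exists m => n mn w; apply: Hm => k hk.
by rewrite /shiftn /bc ifT //; lia.
Qed.

End ShiftInvariance.

Theorem lemma5p1 (R : realType) (E : finType) (a : E)
  (phi : Omega a -> R) (phi_cont : cont_Omega phi) (phi_ext : extensible phi) :
  exists C : R,
    forall tau : probability (BorelOmega a) R,
      (forall A : set (BorelOmega a), measurable A ->
         tau (Sshift (a:=a) @^-1` A) = tau A) ->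
      (\int[tau]_w (phi_gamma phi w)%:E = \int[tau]_w (phi w)%:E + C%:E)%E.
Proof.
exists (- phi (fun _ => a)) => tau tau_inv.
have cpg := cont_phi_gamma phi_ext phi_cont.
rewrite !integral_EFin_Rintegral // -EFinD; congr EFin.
have approx_cvg := Rintegral_unif_cvg (tau := tau) (cont_phi_gamma_approx phi_cont) cpg
  (phi_gamma_approx_unif_cvg phi_ext).
apply: (cvg_unique _ approx_cvg) => //=.
under [X in X @ _]eq_fun do rewrite (Rintegral_phi_gamma_approx phi_cont tau_inv).
apply: cvgB; first exact: Rintegral_phi_shift_bc_cvg.
exact: Rintegral_phi_shift_bc_cvg_left.
Qed.
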